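(* Let $\pi=a_1a_2\cdots a_n\in\mathfrak{S}_n$, let $i_1<i_2<\cdots<i_d$ be the descents of $\pi$ (the indices $i\in[n-1]$ with $a_i>a_{i+1}$) and let $x_k=a_{i_k}$. Put $\pi_0=\pi$ and $\pi_k=r^{x_k}(\pi_{k-1})$ for $k=1,\dots,d$. Then $S(\pi)=\pi_d$, where $S$ is the stack-sorting operator.
   Context: The stack-sorting operator $S$ is defined recursively on words with distinct letters from $\{1,2,\dots\}$: $S$ of the empty word is empty; if $w$ is nonempty write $w=LmR$ with $m$ the greatest letter of $w$, and set $S(w)=S(L)S(R)m$. For a permutation $\sigma=c_1\cdots c_n\in\mathfrak{S}_n$ and a letter $x=c_k$, put $c_{n+1}=n+1$ and define $r^x(\sigma)$ as the permutation obtained by removing $x$ and inserting it between the first pair of consecutive letters $c_j,c_{j+1}$ with $j>k$ (i.e. to the right of $x$) such that $c_j<x<c_{j+1}$ (if no such pair exists, $r^x(\sigma)=\sigma$). *)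

From mathcomp Require Import all_boot.
Set Implicit Arguments. Unset Strict Implicit. Unset Printing Implicit Defensive.

(* greatest letter of a word (letters are >= 1, so 0 is a safe default) *)
Definition maxletter (w : seq nat) : nat := foldr maxn 0 w.

(* S(w) = S(L) S(R) m with w = L m R, m the greatest letter; the fuel
   argument only ensures termination: size w fuel suffices since L, R are
   strictly shorter than w. *)
Fixpoint stack_sort_fuel (fuel : nat) (w : seq nat) : seq nat :=
  match fuel with
  | 0 => [::]
  | f.+1 =>
    match w with
    | [::] => [::]
    | _ :: _ =>
      let m := maxletter w in
      let i := index m w in
      stack_sort_fuel f (take i w) ++ stack_sort_fuel f (drop i.+1 w) ++ [:: m]
    end
  end.

Definition stack_sort (w : seq nat) : seq nat := stack_sort_fuel (size w) w.

(* r^x(sigma): sigma = c_1 ... c_n, x = c_k, c_{n+1} = n+1.  In 0-based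
   indexing x sits at position k0 = index x sigma; candidate j0 ranges over
   k0+1 .. n-1 (i.e. 1-based j > k, j <= n), with c = sigma ++ [:: n+1]. *)
Definition r_move (x : nat) (sigma : seq nat) : seq nat :=
  let n := size sigma in
  let c := sigma ++ [:: n.+1] in
  let k0 := index x sigma in
  let js := [seq j <- iota k0.+1 (n - k0.+1)
               | (nth 0 c j < x) && (x < nth 0 c j.+1)] in
  match js with
  | [::] => sigma
  | j :: _ => take k0 sigma ++ take (j - k0) (drop k0.+1 sigma)
                ++ x :: drop j.+1 sigma
  end.

Definition descent_tops (pi : seq nat) : seq nat :=
  [seq nth 0 pi i | i <- iota 0 (size pi).-1 & nth 0 pi i.+1 < nth 0 pi i].

Definition iterated_moves (pi : seq nat) : seq nat :=
  foldl (fun p x => r_move x p) pi (descent_tops pi).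

(* Write w = L m R with m the largest letter, so that S(w) = S(L) S(R) m. The
   descent tops of w are those of L, then m (if R is nonempty), then those of R.
   At a descent top x, the move r^x simply slides x rightwards to just before
   the first larger letter, or to the end, and each x_k is still a descent top
   when its move is made. Hence the moves at the descent tops of L stay inside L
   (every letter of L is below m) and, by induction, turn L into S(L); the move
   at m then carries m past all of R to the end; and the moves at the descent
   tops of R turn R into S(R). *)

From mathcomp Require Import all_boot zify.

Set Implicit Arguments.
Unset Strict Implicit.
Unset Printing Implicit Defensive.

Lemma maxletter_mem (w : seq nat) : w != [::] -> maxletter w \in w.
Proof.
elim: w => // a [|b t] IH _; first by rewrite /maxletter /= maxn0 mem_head.
rewrite /maxletter /= -/(maxletter (b :: t)) in IH *.
by case: (leqP a (maxletter (b :: t))) => _; rewrite ?mem_head // in_cons IH ?orbT.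
Qed.

Lemma leq_maxletter (w : seq nat) x : x \in w -> x <= maxletter w.
Proof.
elim: w => // a t IH; rewrite in_cons => /orP [/eqP ->|/IH]; first exact: leq_maxl.
by move/leq_trans; apply; apply: leq_maxr.
Qed.

Lemma stack_sort_fuel_cons f (w : seq nat) : w != [::] ->
  let i := index (maxletter w) w in
  stack_sort_fuel f.+1 w =
  stack_sort_fuel f (take i w) ++ stack_sort_fuel f (drop i.+1 w) ++ [:: maxletter w].
Proof. by case: w. Qed.

Lemma stack_sort_fuel_indep f1 f2 w : size w <= f1 -> size w <= f2 ->
  stack_sort_fuel f1 w = stack_sort_fuel f2 w.
Proof.
elim: f1 f2 w => [|f1 IH] [|f2] [|a t] // le1 le2.
rewrite !stack_sort_fuel_cons //; set w := a :: t in le1 le2 *.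
have : index (maxletter w) w < size w by rewrite index_mem maxletter_mem.
move: le1 le2; rewrite /= => le1 le2 lti.
by congr (_ ++ _ ++ _); apply: IH; rewrite ?size_take ?size_drop; try case: ifP; lia.
Qed.

Lemma stack_sort_fuelE f w : size w <= f -> stack_sort_fuel f w = stack_sort w.
Proof. by move=> le_w_f; apply: stack_sort_fuel_indep. Qed.

Lemma stack_sort_max_split (L R : seq nat) m :
  all (fun y => y < m) L -> all (fun y => y <= m) R ->
  stack_sort (L ++ m :: R) = stack_sort L ++ stack_sort R ++ [:: m].
Proof.
move=> ltL leR; set w := L ++ m :: R.
have mL : m \notin L by apply/negP => /(allP ltL); rewrite ltnn.
have max_w : maxletter w = m.
  apply/eqP; rewrite eqn_leq leq_maxletter ?mem_cat ?mem_head ?orbT // andbT.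
  have : maxletter w \in w by apply: maxletter_mem; rewrite /w; case: (L).
  rewrite mem_cat in_cons => /or3P [/(allP ltL)/ltnW | /eqP -> | /(allP leR)] //.
have idx_w : index m w = size L by rewrite index_cat (negbTE mL) /= eqxx addn0.
have size_w : size w = (size L + size R).+1 by rewrite size_cat addnS.
rewrite /stack_sort size_w stack_sort_fuel_cons /=; last by rewrite /w; case: (L).
rewrite max_w idx_w take_size_cat // drop_cat ltnNge leqnSn subSnn /= drop0.
by rewrite !stack_sort_fuelE ?leq_addr ?leq_addl.
Qed.

Lemma uniq_max_ind (P : seq nat -> Prop) :
  P [::] ->
  (forall L m R, all (fun y => y < m) L -> all (fun y => y < m) R ->
     ~~ has (mem L) R -> P L -> P R -> P (L ++ m :: R)) ->
  forall w, uniq w -> P w.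
Proof.
move=> P0 Psplit w; have [n] := ubnP (size w); elim: n w => // n IH w.
have [-> //|wn] := eqVneq w [::].
set m := maxletter w; have le_m y : y \in w -> y <= m := @leq_maxletter w y.
have def_w : w = take (index m w) w ++ m :: drop (index m w).+1 w.
  by rewrite -{1}(cat_take_drop (index m w) w) (drop_nth 0)
             ?nth_index ?index_mem ?maxletter_mem.
clearbody m; move: (take _ w) (drop _ w) def_w => L R -> in le_m *.
rewrite size_cat addnS ltnS cat_uniq /= => lt_w /and3P [uL /norP [mL disjLR] /andP [mR uR]].
have lt_m s : m \notin s -> {subset s <= L ++ m :: R} -> all (fun y => y < m) s.
  move=> ms sw; apply/allP => y ys; rewrite ltn_neqAle le_m ?sw // andbT.
  by apply: contraNneq ms => <-.
apply: Psplit (IH _ (leq_ltn_trans (leq_addr _ _) lt_w) uL)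
              (IH _ (leq_ltn_trans (leq_addl _ _) lt_w) uR); rewrite ?lt_m //.
- by move=> y yL; rewrite mem_cat yL.
- by move=> y yR; rewrite mem_cat in_cons yR !orbT.
Qed.

Definition insert_before_gt (x : nat) (t : seq nat) : seq nat :=
  let q := find (fun y => x < y) t in take q t ++ x :: drop q t.

Fixpoint slide (x : nat) (s : seq nat) : seq nat :=
  if s is y :: t then (if y == x then insert_before_gt x t else y :: slide x t)
  else [::].

Lemma slide_perm x s : perm_eq (slide x s) s.
Proof.
elim: s => //= y t IH; case: eqP => [-> | _]; last by rewrite perm_cons.
rewrite /insert_before_gt -[in X in perm_eq _ X](cat_take_drop (find (fun y => x < y) t) t).
by rewrite -cat1s perm_catCA.
Qed.

Lemma insert_before_gt_cat x L m R : x < m ->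
  insert_before_gt x (L ++ m :: R) = insert_before_gt x L ++ m :: R.
Proof.
rewrite /insert_before_gt find_cat /= => ->; case: ifP => [hasL | /negbT hasNL].
  by rewrite take_cat drop_cat -has_find hasL -catA.
by rewrite addn0 take_size_cat // drop_size_cat // hasNfind // take_size drop_size -catA.
Qed.

Lemma slide_catl x (P s : seq nat) : x \notin P -> slide x (P ++ s) = P ++ slide x s.
Proof.
by elim: P => //= y P IH; rewrite in_cons negb_or eq_sym => /andP [/negbTE -> /IH ->].
Qed.

Lemma slide_catr x L m R : x \in L -> x < m ->
  slide x (L ++ m :: R) = slide x L ++ m :: R.
Proof.
move=> + lt_xm; elim: L => //= y L IH; rewrite in_cons eq_sym.
by case: eqP => [_ _ | _ /IH ->]; rewrite ?insert_before_gt_cat.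
Qed.

Lemma slide_max m R : all (fun y => y < m) R -> slide m (m :: R) = R ++ [:: m].
Proof.
move=> ltR; rewrite /= eqxx /insert_before_gt hasNfind ?take_size ?drop_size //.
by apply/hasPn => y /(allP ltR)/ltnW; rewrite leqNgt.
Qed.

Fixpoint tops (s : seq nat) : seq nat :=
  if s is x :: t then
    (if t is y :: _ then (if y < x then x :: tops t else tops t) else [::])
  else [::].

Lemma tops_cons2 x y t :
  tops [:: x, y & t] = (if y < x then [:: x] else [::]) ++ tops (y :: t).
Proof. by rewrite [LHS]/=; case: ifP. Qed.

Lemma descent_topsE s : descent_tops s = tops s.
Proof.
elim: s => [|x [|y t] IH] //.
rewrite tops_cons2 -{}IH /descent_tops /= -[1]addn0 iotaDl filter_map.
by case: ifP => _ /=; rewrite -map_comp.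
Qed.

Lemma mem_tops s : {subset tops s <= s}.
Proof.
elim: s => [|x [|y t] IH] // z; rewrite tops_cons2 mem_cat in_cons => /orP [|/IH ->].
  by case: ifP => //; rewrite mem_seq1 => _ ->.
by rewrite orbT.
Qed.

Lemma tops_max_split L m R : all (fun y => y < m) L -> all (fun y => y < m) R ->
  tops (L ++ m :: R) = tops L ++ (if R is [::] then [::] else m :: tops R).
Proof.
move=> + ltR; have top_m : tops (m :: R) = if R is [::] then [::] else m :: tops R.
  by case: R ltR => //= b R /andP [->].
elim: L => [|a L IH] //; case/andP=> lt_am /IH {}IH; case: L IH => [|b L] IH.
  by rewrite cat_cons tops_cons2 ltnNge (ltnW lt_am); exact: top_m.
by rewrite [_ ++ _]cat_cons [LHS]tops_cons2 [tops [:: a, b & L]]tops_cons2 -catA -IH.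
Qed.

Definition moves (w xs : seq nat) : seq nat := foldl (fun p x => slide x p) w xs.

Lemma moves_perm w xs : perm_eq (moves w xs) w.
Proof. by elim: xs w => //= x xs IH w; apply: perm_trans (IH _) (slide_perm _ _). Qed.

Lemma moves_cons w x xs : moves w (x :: xs) = moves (slide x w) xs.
Proof. by []. Qed.

Lemma moves_cat w xs ys : moves w (xs ++ ys) = moves (moves w xs) ys.
Proof. exact: foldl_cat. Qed.

Lemma moves_catl (P s xs : seq nat) : {in xs, forall x, x \notin P} ->
  moves (P ++ s) xs = P ++ moves s xs.
Proof.
elim: xs s => //= x xs IH s Pxs.
by rewrite slide_catl ?Pxs ?mem_head // IH // => y y_xs; rewrite Pxs // in_cons y_xs orbT.
Qed.

Lemma moves_catr (L R xs : seq nat) m : {subset xs <= L} -> all (fun y => y < m) L ->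
  moves (L ++ m :: R) xs = moves L xs ++ m :: R.
Proof.
elim: xs L => //= x xs IH L xsL ltL.
have xL : x \in L by rewrite xsL ?mem_head.
rewrite slide_catr ?(allP ltL) // IH ?(perm_all _ (slide_perm _ _)) // => y y_xs.
by rewrite (perm_mem (slide_perm _ _)) xsL // in_cons y_xs orbT.
Qed.

Definition descent_top (x : nat) (p : seq nat) : Prop :=
  exists A y B, p = A ++ [:: x, y & B] /\ y < x.

Lemma descent_top_cat (P Q : seq nat) x s : descent_top x s -> descent_top x (P ++ s ++ Q).
Proof.
by case=> A [y [B [-> lt_yx]]]; exists (P ++ A), y, (B ++ Q); rewrite -!catA.
Qed.

Lemma moves_max_split L m R (ys : seq nat) :
  all (fun y => y < m) L -> all (fun y => y < m) R -> ~~ has (mem L) R ->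
  {subset ys <= R} ->
  moves (L ++ m :: R) (tops L ++ m :: ys) = moves L (tops L) ++ moves R ys ++ [:: m].
Proof.
move=> ltL ltR disjLR ysR; have permL := moves_perm L (tops L).
rewrite moves_cat moves_catr //; last exact: mem_tops.
rewrite moves_cons slide_catl; last first.
  by rewrite (perm_mem permL); apply/negP => /(allP ltL); rewrite ltnn.
rewrite slide_max // moves_catl ?moves_catr // => y /ysR yR.
by rewrite (perm_mem permL); apply: contra disjLR => yL; apply/hasP; exists y.
Qed.

Lemma stack_sort_moves w : uniq w -> stack_sort w = moves w (tops w).
Proof.
move: w; apply: uniq_max_ind => // L m R ltL ltR disjLR IHL IHR.
have leR : all (fun y => y <= m) R by apply: sub_all ltR => y /ltnW.
rewrite stack_sort_max_split // tops_max_split // IHL IHR.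
case: R ltR leR disjLR IHR => [|b R] ltR _ disjLR _.
  by rewrite cats0 moves_catr //; exact: mem_tops.
by rewrite moves_max_split //; exact: mem_tops.
Qed.

Lemma descent_top_moves w : uniq w -> forall k, k < size (tops w) ->
  descent_top (nth 0 (tops w) k) (moves w (take k (tops w))).
Proof.
move: w; apply: uniq_max_ind => // L m R ltL ltR disjLR IHL IHR k.
rewrite tops_max_split // size_cat nth_cat take_cat => lt_k.
have [lt_kL | le_Lk] := ltnP k (size (tops L)).
  rewrite moves_catr //; last by move=> y /mem_take; exact: mem_tops.
  exact: (descent_top_cat [::] (m :: R) (IHL k lt_kL)).
case: R ltR disjLR IHR lt_k => [|b R] ltR disjLR IHR lt_k.
  by move: lt_k; rewrite addn0 ltnNge le_Lk.
have [k' def_k] : exists k', k = size (tops L) + k'.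
  by exists (k - size (tops L)); rewrite subnKC.
move: lt_k; rewrite def_k addKn ltn_add2l; case: k' {def_k} => [_ | k' lt_k'].
  rewrite take0 cats0 moves_catr //; last exact: mem_tops.
  by exists (moves L (tops L)), b, R; rewrite (allP ltR) ?mem_head.
rewrite take_cons moves_max_split //; last by move=> y /mem_take; exact: mem_tops.
exact: (descent_top_cat (moves L (tops L)) [:: m] (IHR k' lt_k')).
Qed.

Lemma filter_iota_first (P : pred nat) a d N : d < N ->
  (forall i, i < d -> ~~ P (a + i)) -> P (a + d) ->
  exists t, filter P (iota a N) = (a + d) :: t.
Proof.
move=> lt_dN before at_d; rewrite -(subnKC (ltnW lt_dN)) iotaD filter_cat.
have -> : filter P (iota a d) = [::].
  apply/eqP; rewrite -[_ == _]negbK -has_filter; apply/hasPn => j.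
  by rewrite mem_iota => /andP [le_aj lt_j]; rewrite -(subnKC le_aj) before // ltn_subLR.
by rewrite -subnSK //= at_d; eexists.
Qed.

Lemma find_gt_sentinel x b (C : seq nat) : x \notin C -> x < b ->
  let q := find (fun z => x < z) C in
  (forall i, i < q -> nth 0 (C ++ [:: b]) i < x) /\ x < nth 0 (C ++ [:: b]) q.
Proof.
move=> xC lt_xb q; have le_qC : q <= size C := find_size _ _.
split=> [i lt_iq | ].
  have lt_iC := leq_trans lt_iq le_qC.
  rewrite nth_cat lt_iC ltn_neqAle leqNgt before_find // andbT.
  by apply: contraNneq xC => <-; rewrite mem_nth.
rewrite nth_cat; have [lt_qC | _] := ltnP q (size C).
  by apply: (nth_find 0 (a := fun z => x < z)); rewrite has_find.
by move: le_qC; rewrite -subn_eq0 => /eqP ->.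
Qed.

(* The letters following a descent top x up to the first letter exceeding x
   (the sentinel n+1 if there is none) are all below x, so the first gap
   c_j < x < c_{j+1} searched by r^x is right before that letter. *)
Lemma r_move_slide x (p : seq nat) : uniq p -> descent_top x p -> x <= size p ->
  r_move x p = slide x p.
Proof.
move=> + [A [y [B [def_p lt_yx]]]]; rewrite def_p; set C := y :: B.
rewrite cat_uniq /= negb_or => /and3P [_ /andP [xA _] /andP [xC _]] le_xn.
set n := size _ in le_xn *; set q := find (fun z => x < z) C.
have q_gt0 : 0 < q by rewrite /q /= (leq_gtF (ltnW lt_yx)).
have le_qC : q <= size C := find_size _ _.
have nth_c i :
    nth 0 ((A ++ x :: C) ++ [:: n.+1]) ((size A).+1 + i) = nth 0 (C ++ [:: n.+1]) i.
  by rewrite -catA nth_cat addSnnS ltnNge leq_addr /= addKn.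
have [lt_before gt_at] := find_gt_sentinel xC (le_xn : x < n.+1).
have index_x : index x (A ++ x :: C) = size A.
  by rewrite index_cat (negbTE xA) /= eqxx addn0.
have size_C : n - (size A).+1 = size C by rewrite /n size_cat /= addnS subSS addKn.
have drop_p k : drop ((size A).+1 + k) (A ++ x :: C) = drop k C.
  by rewrite -cat_rcons drop_cat size_rcons ltnNge leq_addr /= addKn.
set P := fun j => (nth 0 ((A ++ x :: C) ++ [:: n.+1]) j < x)
                  && (x < nth 0 ((A ++ x :: C) ++ [:: n.+1]) j.+1).
have no_jump_before i : i < q.-1 -> ~~ P ((size A).+1 + i).
  move=> lt_i; rewrite /P -addnS !nth_c negb_and; apply/orP; right.
  by rewrite -leqNgt ltnW // lt_before // -ltn_predRL.
have jump_at : P ((size A).+1 + q.-1).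
  by rewrite /P -addnS !nth_c prednK // gt_at lt_before // ltn_predL.
have lt_qC : q.-1 < size C by apply: leq_trans le_qC; rewrite ltn_predL.
have [t filt] := filter_iota_first lt_qC no_jump_before jump_at.
rewrite /r_move index_x -/n size_C filt /= take_size_cat // addSnnS prednK // addKn.
rewrite -addSn !drop_p -[(size A).+1]addn0 drop_p drop0.
by rewrite slide_catl //= eqxx.
Qed.

Lemma foldl_r_move n w xs : perm_eq w (iota 1 n) ->
  (forall k, k < size xs -> descent_top (nth 0 xs k) (moves w (take k xs))) ->
  foldl (fun p x => r_move x p) w xs = moves w xs.
Proof.
elim: xs w => //= x xs IH w perm_w desc.
have desc_x : descent_top x w := desc 0 (ltn0Sn _).
have x_le_w : x <= size w.
  case: desc_x => A [y [B [def_w _]]].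
  have : x \in w by rewrite def_w mem_cat mem_head orbT.
  by rewrite (perm_mem perm_w) (perm_size perm_w) size_iota mem_iota add1n ltnS => /andP [].
rewrite r_move_slide ?(perm_uniq perm_w) ?iota_uniq // IH //.
  exact: perm_trans (slide_perm _ _) perm_w.
by move=> k lt_k; apply: (desc k.+1).
Qed.

Theorem theorem4p1 (n : nat) (pi : seq nat) :
  perm_eq pi (iota 1 n) -> stack_sort pi = iterated_moves pi.
Proof.
move=> perm_pi; have uniq_pi : uniq pi by rewrite (perm_uniq perm_pi) iota_uniq.
rewrite /iterated_moves descent_topsE stack_sort_moves //.
by rewrite (foldl_r_move perm_pi) //; exact: descent_top_moves.
Qed.
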